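(* A unital hom-associative algebra $(V,\star,\alpha,1)$ is of type $I_1$ if and only if it is of type $II$.
   Context: Let $k$ be a commutative ring. A unital hom-associative algebra is a tuple $(V,\star,\alpha,1)$ where $V$ is a $k$-module, $\star:V\times V\to V$ is $k$-bilinear, $\alpha:V\to V$ is $k$-linear, and $1\in V$ satisfies $1\star x=x\star 1=x$ for all $x\in V$. It is of type $T$ if the identity for $T$ holds for all $x,y,z\in V$: $I_1$: $\alpha(x)\star(y\star z)=(x\star y)\star\alpha(z)$; $II$: $x\star\alpha(y\star z)=\alpha(x\star y)\star z$. *)

From HB Require Import structures.
From mathcomp Require Import all_boot all_order all_algebra.
Set Implicit Arguments. Unset Strict Implicit. Unset Printing Implicit Defensive.
Import GRing.Theory.
Local Open Scope ring_scope.

Definition unital_hom_alg (k : comPzRingType) (V : lmodType k)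
  (star : V -> V -> V) (alpha : V -> V) (one : V) : Prop :=
  [/\ (forall y, linear (fun x => star x y)),
      (forall x, linear (star x)),
      linear alpha
    & forall x, star one x = x /\ star x one = x].

Definition type_I1 (k : comPzRingType) (V : lmodType k)
  (star : V -> V -> V) (alpha : V -> V) : Prop :=
  forall x y z, star (alpha x) (star y z) = star (star x y) (alpha z).

Definition type_II (k : comPzRingType) (V : lmodType k)
  (star : V -> V -> V) (alpha : V -> V) : Prop :=
  forall x y z, star x (alpha (star y z)) = star (alpha (star x y)) z.

From HB Require Import structures.
From mathcomp Require Import all_boot all_order all_algebra.

(* Say that alpha "slides" across the product when alpha(a) * b = a * alpha(b)
   for all a, b.  Each of the identities I_1 and II implies that alpha slides:
   specialise the middle variable to the unit.  Conversely, once alpha slides,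
   I_1 and II are rewritings of each other:
     alpha(x) * (y * z) = x * alpha(y * z)   and
     (x * y) * alpha(z) = alpha(x * y) * z. *)

Section SlidingMap.

Variables (T : Type) (star : T -> T -> T) (alpha : T -> T).

Definition slides : Prop := forall a b, star (alpha a) b = star a (alpha b).

Definition identity_I1 : Prop :=
  forall x y z, star (alpha x) (star y z) = star (star x y) (alpha z).

Definition identity_II : Prop :=
  forall x y z, star x (alpha (star y z)) = star (alpha (star x y)) z.

Lemma slides_I1_iff_II : slides -> (identity_I1 <-> identity_II).
Proof.
move=> slide; split=> H x y z.
- by rewrite -slide H slide.
- by rewrite slide H -slide.
Qed.

Variable one : T.
Hypotheses (one_mul : forall x, star one x = x) (mul_one : forall x, star x one = x).

Lemma I1_slides : identity_I1 -> slides.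
Proof. by move=> H a b; have := H a one b; rewrite one_mul mul_one. Qed.

Lemma II_slides : identity_II -> slides.
Proof. by move=> H a b; have := H a one b; rewrite one_mul mul_one => ->. Qed.

Lemma unital_I1_iff_II : identity_I1 <-> identity_II.
Proof.
split=> H.
- by apply/(slides_I1_iff_II (I1_slides H)).
- by apply/(slides_I1_iff_II (II_slides H)).
Qed.

End SlidingMap.

Theorem proposition2p4 (k : comPzRingType) (V : lmodType k)
  (star : V -> V -> V) (alpha : V -> V) (one : V) :
  unital_hom_alg star alpha one ->
  (type_I1 star alpha <-> type_II star alpha).
Proof.
case=> _ _ _ unit_laws.
exact: unital_I1_iff_II (fun x => proj1 (unit_laws x))
                        (fun x => proj2 (unit_laws x)).
Qed.
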